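(* On the category $\mathrm{Diff}$ of diffeological spaces the following relations hold among the Grothendieck topologies $T_{numDop},T_{Dop},T_{suDld},T_{suDsu},T_{Dlsplit},T_{susu},T_{sudu}$: $T_{numDop}\prec T_{Dop}$; $T_{Dop}\sim T_{suDld}$; $T_{suDld}\subset T_{suDsu}$ and $T_{suDld}\sim T_{suDsu}$; $T_{suDsu}\subset T_{Dlsplit}$ and $T_{suDsu}\sim T_{Dlsplit}$; $T_{Dlsplit}\subset T_{sudu}$; $T_{suDsu}\subset T_{susu}\subset T_{sudu}$.
   Context: A diffeological space is a set $X$ with a collection of maps $c:U\to X$ (''plots''), $U$ ranging over open subsets of $\mathbb{R}^n$ ($n\ge0$), such that constant maps are plots, $c\circ f$ is a plot for any plot $c:V\to X$ and smooth $f:U\to V$, and a map that is locally a plot (on an open cover, with agreeing restrictions) is a plot. Smooth maps send plots to plots (by composition); $\mathrm{Diff}$ is the resulting category. A subset $A\subset X$ is D-open if its preimage under every plot is open; subsets carry the subspace diffeology. Classes of smooth maps $\pi:Y\to X$: subduction — for every plot $c:U\to X$ and $x\in U$ there are an open $x\in U_x\subset U$ and smooth $\sigma:U_x\to Y$ with $\pi\circ\sigma=c|_{U_x}$; submersion — for all $y\in Y$, plots $c:U\to X$ and $x\in U$ with $c(x)=\pi(y)$, such $U_x,\sigma$ exist additionally with $\sigma(x)=y$; D-local diffeomorphism — each $y$ has a D-open neighbourhood $A$ with $\pi(A)$ D-open and $\pi|_A:A\to\pi(A)$ a diffeomorphism; D-submersion — for every $y\in Y$ there are a D-open neighbourhood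 $A$ of $\pi(y)$ and smooth $\sigma:A\to Y$ with $\pi\circ\sigma=\mathrm{id}_A$, $\sigma(\pi(y))=y$; D-locally split — every $x\in X$ has a D-open neighbourhood $A$ with smooth $\sigma:A\to Y$, $\pi\circ\sigma=\mathrm{id}_A$. A D-open cover of $X$ is a family $(\pi_i:X_i\to X)$ of smooth maps with D-open images $A_i$ covering $X$ and $\pi_i:X_i\to A_i$ diffeomorphisms; numerable if $(A_i)$ is a numerable open cover for the D-topology. Grothendieck topologies (coverings): $T_{numDop}$ numerable D-open covers; $T_{Dop}$ D-open covers; $T_{suDld}$ single surjective D-local diffeomorphisms; $T_{suDsu}$ single surjective D-submersions; $T_{Dlsplit}$ single D-locally split maps; $T_{susu}$ single surjective submersions; $T_{sudu}$ single subductions. A morphism is universal if its pullback along every morphism exists; $\pi$ is $T$-locally split if there is a $T$-covering $(\pi_i:U_i\to X)$ and $\rho_i:U_i\to Y$ with $\pi\circ\rho_i=\pi_i$. $T_1\prec T_2$: every universal $T_1$-locally split morphism is $T_2$-locally split; $T_1\sim T_2$: $\prec$ both ways; $T_1\subset T_2$: every $T_1$-covering is a $T_2$-covering. *)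

From HB Require Import structures.
From mathcomp Require Import all_boot all_order all_algebra.
From mathcomp Require Import all_classical all_reals all_analysis.
From Stdlib Require List.
Import numFieldNormedType.Exports.

Set Implicit Arguments.
Unset Strict Implicit.
Unset Printing Implicit Defensive.

Local Open Scope classical_set_scope.
Local Open Scope ring_scope.

Section Diffeology.
Context {R : realType}.

Fixpoint iter_derive (n m : nat) (l : seq 'rV[R]_n) (g : 'rV[R]_n -> 'rV[R]_m)
  : 'rV[R]_n -> 'rV[R]_m :=
  match l with
  | [::] => g
  | v :: l' => fun x => derive (iter_derive l' g) x v
  end.

Definition smooth_on (n m : nat) (U : set 'rV[R]_n) (g : 'rV[R]_n -> 'rV[R]_m) :=
  forall (l : seq 'rV[R]_n) (x : 'rV[R]_n), U x ->
    {for x, continuous (iter_derive l g)} /\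
    (forall v : 'rV[R]_n, derivable (iter_derive l g) x v).

Definition smooth_dom (n m : nat) (U : set 'rV[R]_n) (V : set 'rV[R]_m)
    (f : U -> V) :=
  exists g : 'rV[R]_n -> 'rV[R]_m,
    smooth_on U g /\ forall x : U, val (f x) = g (val x).

Definition incl_dom (T : Type) (W U : set T) (h : W `<=` U) : W -> U :=
  fun x => exist _ (val x) (mem_set (h _ (set_mem (valP x)))).

Record diffspace := DiffSpace {
  carrier :> Type;
  plot : forall (n : nat) (U : set 'rV[R]_n), (U -> carrier) -> Prop;
  plot_open : forall n (U : set 'rV[R]_n) (c : U -> carrier), plot c -> open U;
  plot_const : forall n (U : set 'rV[R]_n) (x0 : carrier),
      open U -> plot (fun _ : U => x0);
  plot_comp : forall n m (U : set 'rV[R]_n) (V : set 'rV[R]_m)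
      (c : V -> carrier) (f : U -> V),
      plot c -> open U -> smooth_dom f -> plot (c \o f);
  plot_local : forall n (U : set 'rV[R]_n) (c : U -> carrier),
      open U ->
      (forall x, U x -> exists (W : set 'rV[R]_n) (h : W `<=` U),
          [/\ open W, W x & plot (c \o incl_dom h)]) ->
      plot c
}.

Definition smooth (X Y : diffspace) (f : X -> Y) :=
  forall n (U : set 'rV[R]_n) (c : U -> X), plot c -> plot (f \o c).

Definition Dopen (X : diffspace) (A : set X) :=
  forall n (U : set 'rV[R]_n) (c : U -> X), plot c ->
    open [set x : 'rV[R]_n | exists h : x \in U, A (c (exist _ x h))].

Definition Dclosure (X : diffspace) (S : set X) : set X :=
  [set x | forall W : set X, Dopen W -> W x -> exists2 y, W y & S y].

Definition Dcontinuous (X : diffspace) (phi : X -> R) :=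
  forall O : set R, open O -> Dopen (phi @^-1` O).

Section Subspace.
Variables (X : diffspace) (A : set X).

Definition sub_plot n (U : set 'rV[R]_n) (c : U -> A) := plot (val \o c).

Lemma sub_plot_open n (U : set 'rV[R]_n) (c : U -> A) : sub_plot c -> open U.
Proof. exact: plot_open. Qed.

Lemma sub_plot_const n (U : set 'rV[R]_n) (x0 : A) :
  open U -> sub_plot (fun _ : U => x0).
Proof. exact: (plot_const (val x0)). Qed.

Lemma sub_plot_comp n m (U : set 'rV[R]_n) (V : set 'rV[R]_m)
   (c : V -> A) (f : U -> V) : sub_plot c -> open U -> smooth_dom f ->
   sub_plot (c \o f).
Proof. exact: plot_comp. Qed.

Lemma sub_plot_local n (U : set 'rV[R]_n) (c : U -> A) : open U ->
  (forall x, U x -> exists (W : set 'rV[R]_n) (h : W `<=` U),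
      [/\ open W, W x & sub_plot (c \o incl_dom h)]) -> sub_plot c.
Proof. exact: plot_local. Qed.

Definition subspace : diffspace :=
  @DiffSpace A sub_plot sub_plot_open sub_plot_const sub_plot_comp sub_plot_local.
End Subspace.

Definition diffeo_onto (Z X : diffspace) (f : Z -> X) (B : set X) :=
  [/\ smooth f, f @` setT = B &
      exists g : subspace B -> Z, smooth g /\
        (forall b : subspace B, f (g b) = val b) /\
        (forall (z : Z) (h : f z \in B), g (exist _ (f z) h) = z)].

Section Maps.
Variables (Y X : diffspace) (p : Y -> X).

Definition subduction :=
  smooth p /\
  forall n (U : set 'rV[R]_n) (c : U -> X), plot c ->
    forall x : U, exists (Ux : set 'rV[R]_n) (h : Ux `<=` U),
      Ux (val x) /\ open Ux /\
      exists sigma : Ux -> Y, plot sigma /\ p \o sigma = c \o incl_dom h.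

Definition submersion :=
  smooth p /\
  forall (y : Y) n (U : set 'rV[R]_n) (c : U -> X), plot c ->
    forall x : U, c x = p y -> exists (Ux : set 'rV[R]_n) (h : Ux `<=` U),
      Ux (val x) /\ open Ux /\
      exists sigma : Ux -> Y, plot sigma /\ p \o sigma = c \o incl_dom h /\
        (forall hx : val x \in Ux, sigma (exist _ (val x) hx) = y).

Definition D_local_diffeo :=
  smooth p /\
  forall y : Y, exists A : set Y, [/\ Dopen A, A y, Dopen (p @` A) &
      diffeo_onto (fun a : subspace A => p (val a)) (p @` A)].

Definition D_submersion :=
  smooth p /\
  forall y : Y, exists A : set X, [/\ Dopen A, A (p y) &
      exists sigma : subspace A -> Y, [/\ smooth sigma,
        (forall a : subspace A, p (sigma a) = val a) &
        (forall h : p y \in A, sigma (exist _ (p y) h) = y)]].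

Definition D_locally_split :=
  smooth p /\
  forall x : X, exists A : set X, [/\ Dopen A, A x &
      exists sigma : subspace A -> Y, smooth sigma /\
        (forall a : subspace A, p (sigma a) = val a)].

End Maps.

Record family (X : diffspace) := Family {
  fidx : Type;
  fdom : fidx -> diffspace;
  fmap : forall i, fdom i -> X;
  fmap_smooth : forall i, smooth (@fmap i)
}.
Arguments fidx {X} f.
Arguments fdom {X} f i.
Arguments fmap {X} f i _.

Definition coverage := forall X : diffspace, family X -> Prop.

Definition single_family (X : diffspace) (F : family X) :=
  exists i0 : fidx F, forall i, i = i0.

Definition D_open_cover (X : diffspace) (F : family X) :=
  (forall x : X, exists i, exists u, fmap F i u = x) /\
  forall i, Dopen (fmap F i @` setT) /\
            diffeo_onto (fmap F i) (fmap F i @` setT).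

Definition sum_list (I : Type) (s : list I) (f : I -> R) : R :=
  List.fold_right (fun i acc => f i + acc) 0 s.

(* Dold: an open cover (A_i) is numerable if it admits a locally finite
   partition of unity (phi_i) with closure(phi_i^{-1}(R\{0})) <= A_i;
   here for the D-topology *)
Definition numerable_cover (X : diffspace) (I : Type) (A : I -> set X) :=
  exists phi : I -> X -> R,
    [/\ forall i, Dcontinuous (phi i),
        forall i x, 0 <= phi i x,
        forall i, Dclosure [set x | phi i x != 0] `<=` A i,
        forall x : X, exists W : set X, [/\ Dopen W, W x &
            exists s : list I, forall i, (exists2 w, W w & phi i w != 0) -> List.In i s] &
        forall x : X, exists s : list I, [/\ List.NoDup s,
            forall i, phi i x != 0 -> List.In i s & sum_list s (fun i => phi i x) = 1]].

Definition T_numDop : coverage := fun X F =>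
  D_open_cover F /\ numerable_cover (fun i => fmap F i @` setT).
Definition T_Dop : coverage := fun X F => D_open_cover F.
Definition T_suDld : coverage := fun X F => single_family F /\
  forall i, D_local_diffeo (fmap F i) /\ fmap F i @` setT = setT.
Definition T_suDsu : coverage := fun X F => single_family F /\
  forall i, D_submersion (fmap F i) /\ fmap F i @` setT = setT.
Definition T_Dlsplit : coverage := fun X F => single_family F /\
  forall i, D_locally_split (fmap F i).
Definition T_susu : coverage := fun X F => single_family F /\
  forall i, submersion (fmap F i) /\ fmap F i @` setT = setT.
Definition T_sudu : coverage := fun X F => single_family F /\
  forall i, subduction (fmap F i).

Definition is_pullback (X Y Z P : diffspace) (f : X -> Z) (g : Y -> Z)
    (p1 : P -> X) (p2 : P -> Y) :=
  [/\ smooth p1, smooth p2, (forall q, f (p1 q) = g (p2 q)) &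
      forall (Q : diffspace) (q1 : Q -> X) (q2 : Q -> Y),
        smooth q1 -> smooth q2 -> (forall q, f (q1 q) = g (q2 q)) ->
        exists u : Q -> P, [/\ smooth u, p1 \o u = q1, p2 \o u = q2 &
          forall u' : Q -> P, smooth u' -> p1 \o u' = q1 -> p2 \o u' = q2 ->
            u' = u]].

Definition universal (Y X : diffspace) (p : Y -> X) :=
  smooth p /\
  forall (X' : diffspace) (f : X' -> X), smooth f ->
    exists (P : diffspace) (p1 : P -> Y) (p2 : P -> X'), is_pullback p f p1 p2.

Definition locally_split (T : coverage) (Y X : diffspace) (p : Y -> X) :=
  exists F : family X, T X F /\
    exists rho : forall i, fdom F i -> Y,
      (forall i, smooth (rho i)) /\ (forall i u, p (rho i u) = fmap F i u).

Definition cov_prec (T1 T2 : coverage) :=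
  forall (Y X : diffspace) (p : Y -> X),
    universal p -> locally_split T1 p -> locally_split T2 p.
Definition cov_sim (T1 T2 : coverage) := cov_prec T1 T2 /\ cov_prec T2 T1.
Definition cov_sub (T1 T2 : coverage) := forall X (F : family X), T1 X F -> T2 X F.

End Diffeology.

From Pilot Require Import Defs.
From mathcomp Require Import all_boot all_order all_algebra.
From mathcomp Require Import all_classical all_reals all_analysis.
Import numFieldNormedType.Exports.

Set Implicit Arguments.
Unset Strict Implicit.
Unset Printing Implicit Defensive.

Local Open Scope classical_set_scope.
Local Open Scope ring_scope.

(* For T among T_Dop, T_suDld, T_suDsu and T_Dlsplit, a map p : Y -> X is
   T-locally split iff it has smooth sections over the members of a D-open
   cover of X.  Such sections are exactly what D-open covers and D-locally
   split maps provide; conversely, given sections s_i over D-open sets A_i,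
   the projection of the disjoint union of the A_i onto X is a surjective
   D-local diffeomorphism and the s_i glue to a lift of it along p.  The
   inclusions of coverings come from the implications D-local diffeo =>
   D-submersion => submersion and D-locally split => subduction, and, for
   surjective maps, D-submersion => D-locally split and submersion =>
   subduction; they are obtained by pulling sections over D-open sets back
   along plots. *)

Section Diffeology.
Context {R : realType}.
Local Notation diffspace := (@Defs.diffspace R).
Local Notation subspace A := (@Defs.subspace R _ A).
Local Notation family := (@Defs.family R).
Local Notation fdom F i := (@Defs.fdom R _ F i).
Local Notation fmap F i := (@Defs.fmap R _ F i).

Lemma exist_mem_irr (T U : Type) (A : set T) (f : A -> U) x (h1 h2 : x \in A) :
  f (exist _ x h1) = f (exist _ x h2).
Proof. by rewrite (bool_irrelevance h1 h2). Qed.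

Lemma incl_dom_eq n (W U : set 'rV[R]_n) (h : W `<=` U) (w : W) (u : U) :
  val w = val u -> incl_dom h w = u.
Proof. by move=> e; apply: val_inj. Qed.

Lemma iter_derive_id n (l : seq 'rV[R]_n) :
  iter_derive l id = id \/ exists k : 'rV[R]_n, iter_derive l id = cst k.
Proof.
elim: l => [|v l [IH|[k IH]]] /=; [by left | right; exists v | right; exists 0];
  by apply: funext => x; rewrite IH ?derive_id ?derive_cst.
Qed.

Lemma smooth_on_id n (U : set 'rV[R]_n) : smooth_on U id.
Proof.
move=> l x _; case: (iter_derive_id l) => [->|[k ->]]; split => [|v].
- exact: cvg_id.
- exact: derivable_id.
- exact: cst_continuous.
- exact: derivable_cst.
Qed.

Lemma smooth_dom_incl n (W U : set 'rV[R]_n) (h : W `<=` U) :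
  smooth_dom (incl_dom h).
Proof. by exists id; split; [exact: smooth_on_id |]. Qed.

Lemma smooth_dom_preimage_nbhs n m (U : set 'rV[R]_n) (V : set 'rV[R]_m)
    (f : U -> V) (O : set 'rV[R]_m) (u : U) :
  open U -> smooth_dom f -> open O -> O (val (f u)) ->
  exists P : set 'rV[R]_n, [/\ open P, P (val u) &
    forall u' : U, P (val u') -> O (val (f u'))].
Proof.
move=> oU [g [gs fg]] oO Ofu; exists (U `&` g @^-1` O); split.
- rewrite openE => x [Ux Ogx]; have [gx _] := gs [::] x Ux.
  by apply: filterI; [exact: open_nbhs_nbhs | apply: gx; exact: open_nbhs_nbhs].
- by split; [exact: set_mem (valP u) | rewrite /preimage /= -fg].
- by move=> u' [_ Ou']; rewrite fg.
Qed.

Lemma smooth_comp (X Y Z : diffspace) (f : X -> Y) (g : Y -> Z) :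
  smooth f -> smooth g -> smooth (g \o f).
Proof. by move=> fs gs n U c pc; apply/gs/fs. Qed.

Lemma smooth_val (X : diffspace) (A : set X) :
  smooth (fun a : subspace A => val a).
Proof. by []. Qed.

Lemma val_image (X : Type) (A : set X) : (fun a : A => val a) @` setT = A.
Proof.
apply/seteqP; split; first by move=> x [a _ <-]; exact: set_mem (valP a).
by move=> x Ax; exists (exist _ x (mem_set Ax)).
Qed.

Lemma val_diffeo_onto (X : diffspace) (B : set X) :
  diffeo_onto (fun b : subspace B => val b) ((fun b : subspace B => val b) @` setT).
Proof.
split; [exact: smooth_val | by [] |].
have inB (b : subspace ((fun b : subspace B => val b) @` setT)) : val b \in B.
  by apply: mem_set; rewrite -[X in X (val b)]val_image; exact: set_mem (valP b).
exists (fun b => exist (fun x => x \in B) (val b) (inB b)).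
split; first by move=> n U c pc.
by split => // z h; exact: val_inj.
Qed.

Section PlotPreimage.
Variables (X : diffspace) (n : nat) (U : set 'rV[R]_n) (c : U -> X) (A : set X).

Definition plot_preimage := [set y | exists h : y \in U, A (c (exist _ y h))].

Lemma plot_preimage_sub : plot_preimage `<=` U.
Proof. by move=> y [h _]; exact: set_mem. Qed.

Lemma plot_preimage_val (u : U) : A (c u) -> plot_preimage (val u).
Proof. by case: u => y h Ay; exists h. Qed.

Lemma plot_preimage_open : plot c -> Dopen A -> open plot_preimage.
Proof. by move=> pc DA; exact: DA. Qed.

Lemma plot_preimage_mem (w : plot_preimage) : c (incl_dom plot_preimage_sub w) \in A.
Proof.
apply: mem_set; case: w => y hy /=; case: (set_mem hy) => h Ay.
by rewrite (exist_mem_irr c _ h).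
Qed.

Definition plot_restrict (w : plot_preimage) : subspace A :=
  exist (fun x => x \in A) _ (plot_preimage_mem w).

Lemma plot_restrict_plot : plot c -> Dopen A -> plot plot_restrict.
Proof.
move=> pc DA; apply: (plot_comp pc (plot_preimage_open pc DA)).
exact: smooth_dom_incl.
Qed.

End PlotPreimage.
Arguments plot_preimage_sub {X n U} c A.
Arguments plot_restrict {X n U} c A.

Section MapClasses.
Variables (Y X : diffspace) (p : Y -> X).

Lemma D_local_diffeo_D_submersion : D_local_diffeo p -> D_submersion p.
Proof.
case=> ps Hp; split => // y.
have [A [_ Ay DpA [_ _ [g [gs [pg gp]]]]]] := Hp y.
exists (p @` A); split => //.
exists (fun b => val (g b)); split.
- exact: smooth_comp gs (@smooth_val _ A).
- by move=> b; rewrite pg.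
- by move=> h; rewrite (gp (exist _ y (mem_set Ay)) h).
Qed.

Lemma D_submersion_D_locally_split :
  D_submersion p -> p @` setT = setT -> D_locally_split p.
Proof.
case=> ps Hp psurj; split => // x.
have [y _ <-] : (p @` setT) x by rewrite psurj.
have [A [DA Apy [s [ss psK _]]]] := Hp y.
by exists A; split => //; exists s.
Qed.

Lemma D_locally_split_subduction : D_locally_split p -> subduction p.
Proof.
case=> ps Hp; split => // n U c pc u.
have [A [DA Acu [s [ss psK]]]] := Hp (c u).
exists (plot_preimage c A), (plot_preimage_sub c A).
split; first exact: plot_preimage_val.
split; first exact: plot_preimage_open.
exists (s \o plot_restrict c A); split; first exact/ss/plot_restrict_plot.
by apply: funext => w /=; rewrite psK.
Qed.

Lemma D_submersion_submersion : D_submersion p -> submersion p.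
Proof.
case=> ps Hp; split => // y n U c pc u cu.
have [A [DA Apy [s [ss psK sy]]]] := Hp y.
exists (plot_preimage c A), (plot_preimage_sub c A).
split; first by apply: plot_preimage_val; rewrite cu.
split; first exact: plot_preimage_open.
exists (s \o plot_restrict c A); split; first exact/ss/plot_restrict_plot.
split; first by apply: funext => w /=; rewrite psK.
move=> hu /=; rewrite -[RHS](sy (mem_set Apy)); congr s; apply: val_inj => /=.
by rewrite -cu; congr c; exact: incl_dom_eq.
Qed.

Lemma submersion_subduction : submersion p -> p @` setT = setT -> subduction p.
Proof.
case=> ps Hp psurj; split => // n U c pc u.
have [y _ pyu] : (p @` setT) (c u) by rewrite psurj.
have [Uu [h [Uuu [oUu [s [sp [psK _]]]]]]] := Hp y n U c pc u (esym pyu).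
by exists Uu, h; do 2!split => //; exists s.
Qed.

End MapClasses.

Lemma numDop_sub_Dop : cov_sub (@T_numDop R) (@T_Dop R).
Proof. by move=> X F []. Qed.

Lemma suDld_sub_suDsu : cov_sub (@T_suDld R) (@T_suDsu R).
Proof.
move=> X F [F1 HF]; split => // i; have [pD psurj] := HF i.
by split => //; exact: D_local_diffeo_D_submersion.
Qed.

Lemma suDsu_sub_Dlsplit : cov_sub (@T_suDsu R) (@T_Dlsplit R).
Proof.
move=> X F [F1 HF]; split => // i; have [pD psurj] := HF i.
exact: D_submersion_D_locally_split.
Qed.

Lemma Dlsplit_sub_sudu : cov_sub (@T_Dlsplit R) (@T_sudu R).
Proof.
by move=> X F [F1 HF]; split => // i; exact: D_locally_split_subduction.
Qed.

Lemma suDsu_sub_susu : cov_sub (@T_suDsu R) (@T_susu R).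
Proof.
move=> X F [F1 HF]; split => // i; have [pD psurj] := HF i.
by split => //; exact: D_submersion_submersion.
Qed.

Lemma susu_sub_sudu : cov_sub (@T_susu R) (@T_sudu R).
Proof.
move=> X F [F1 HF]; split => // i; have [ps psurj] := HF i.
exact: submersion_subduction.
Qed.

Lemma cov_sub_locally_split (T1 T2 : @coverage R) (Y X : diffspace) (p : Y -> X) :
  cov_sub T1 T2 -> locally_split T1 p -> locally_split T2 p.
Proof. by move=> T12 [F [T1F lift]]; exists F; split => //; exact: T12. Qed.

Lemma cov_sub_prec (T1 T2 : @coverage R) : cov_sub T1 T2 -> cov_prec T1 T2.
Proof. by move=> T12 Y X p _; exact: cov_sub_locally_split. Qed.

Definition local_sections (Y X : diffspace) (p : Y -> X) :=
  forall x : X, exists B : set X, [/\ Dopen B, B x &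
    exists s : subspace B -> Y, smooth s /\ forall b, p (s b) = val b].

Definition family_local_sections (X : diffspace) (F : family X) :=
  forall x : X, exists i (B : set X), [/\ Dopen B, B x &
    exists g : subspace B -> fdom F i, smooth g /\ forall b, fmap F i (g b) = val b].

Lemma locally_split_local_sections (T : @coverage R) (Y X : diffspace) (p : Y -> X) :
  (forall F, T X F -> family_local_sections F) ->
  locally_split T p -> local_sections p.
Proof.
move=> Tsec [F [TF [rho [rhos prho]]]] x.
have [i [B [DB Bx [g [gs Fg]]]]] := Tsec F TF x.
exists B; split => //; exists (rho i \o g); split; first exact: smooth_comp gs _.
by move=> b /=; rewrite prho Fg.
Qed.

Lemma D_open_cover_local_sections (X : diffspace) (F : family X) :
  D_open_cover F -> family_local_sections F.
Proof.
case=> Fcov FD x; have [i [u Fux]] := Fcov x.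
have [DFi [_ _ [g [gs [Fg _]]]]] := FD i.
by exists i, (fmap F i @` setT); split => //; [exists u | exists g].
Qed.

Lemma Dlsplit_local_sections (X : diffspace) (F : family X) :
  @T_Dlsplit R X F -> family_local_sections F.
Proof.
case=> [[i0 _] HF] x; have [_ Hx] := HF i0.
have [B [DB Bx [g [gs Fg]]]] := Hx x.
by exists i0, B; split => //; exists g.
Qed.

Section SumSpace.
Variables (X : diffspace) (I : Type) (A : I -> set X).

Definition sum_carrier := {ix : I * X | A ix.1 ix.2}.

(* The diffeology of the disjoint union of the subspaces [A i]: a plot is a
   plot of X together with a locally constant choice of summand. *)
Definition sum_plot n (U : set 'rV[R]_n) (c : U -> sum_carrier) :=
  plot (fun u => (sval (c u)).2) /\
  forall u : U, exists V : set 'rV[R]_n, [/\ open V, V (val u) &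
     forall v : U, V (val v) -> (sval (c v)).1 = (sval (c u)).1].

Lemma sum_plot_open n (U : set 'rV[R]_n) (c : U -> sum_carrier) :
  sum_plot c -> open U.
Proof. by case=> pc _; exact: plot_open pc. Qed.

Lemma sum_plot_const n (U : set 'rV[R]_n) (w : sum_carrier) :
  open U -> sum_plot (fun _ : U => w).
Proof.
move=> oU; split; first exact: plot_const.
by move=> u; exists setT; split => //; exact: openT.
Qed.

Lemma sum_plot_comp n m (U : set 'rV[R]_n) (V : set 'rV[R]_m)
    (c : V -> sum_carrier) (f : U -> V) :
  sum_plot c -> open U -> smooth_dom f -> sum_plot (c \o f).
Proof.
move=> [pc c_lc] oU fs; split; first exact: plot_comp pc oU fs.
move=> u; have [N [oN Nfu cN]] := c_lc (f u).
have [P [oP Pu fP]] := smooth_dom_preimage_nbhs oU fs oN Nfu.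
by exists P; split => // v Pv /=; rewrite (cN _ (fP _ Pv)).
Qed.

Lemma sum_plot_local n (U : set 'rV[R]_n) (c : U -> sum_carrier) : open U ->
  (forall x, U x -> exists (W : set 'rV[R]_n) (h : W `<=` U),
      [/\ open W, W x & sum_plot (c \o incl_dom h)]) -> sum_plot c.
Proof.
move=> oU c_loc; split.
  apply: plot_local oU _ => x Ux; have [W [h [oW Wx [pW _]]]] := c_loc x Ux.
  by exists W, h.
move=> u; have [W [h [oW Wu [_ cW]]]] := c_loc (val u) (set_mem (valP u)).
pose inW (v : U) (Wv : W (val v)) : W := exist _ (val v) (mem_set Wv).
have inWK v Wv : incl_dom h (inW v Wv) = v by exact: incl_dom_eq.
have [V [oV Vu cV]] := cW (inW u Wu).
exists (V `&` W); split => //; first exact: openI.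
move=> v [Vv Wv]; move: (cV (inW v Wv) Vv) => /=.
by rewrite !inWK.
Qed.

Definition sum_space : diffspace :=
  DiffSpace sum_plot_open sum_plot_const sum_plot_comp sum_plot_local.

Definition sum_proj (w : sum_space) : X := (sval w).2.

Definition summand (i : I) : set sum_space := [set w | (sval w).1 = i].

Lemma sum_proj_smooth : smooth sum_proj.
Proof. by move=> n U c []. Qed.

Lemma summand_Dopen i : Dopen (summand i).
Proof.
move=> n U c pc; rewrite openE => x [h ci].
have [V [oV Vx cV]] := pc.2 (exist _ x h).
apply: (@filterS _ _ _ (V `&` U)).
  move=> y [Vy Uy]; exists (mem_set Uy).
  by rewrite /summand /= (cV (exist _ y (mem_set Uy)) Vy).
apply: filterI; apply: open_nbhs_nbhs; split => //; last exact: set_mem.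
exact: sum_plot_open pc.
Qed.

Lemma sum_proj_summand i : sum_proj @` summand i = A i.
Proof.
apply/seteqP; split; first by move=> x [w wi <-]; move: (proj2_sig w); rewrite wi.
by move=> x Ax; exists (exist _ (i, x) Ax).
Qed.

Lemma sum_proj_summand_mem i (b : subspace (sum_proj @` summand i)) : A i (val b).
Proof. by rewrite -(sum_proj_summand i); exact: set_mem (valP b). Qed.

Definition summand_incl i (b : subspace (sum_proj @` summand i)) :
    subspace (summand i) :=
  exist (fun w => w \in summand i)
    (exist (fun ix : I * X => A ix.1 ix.2) (i, val b) (sum_proj_summand_mem b))
    (mem_set (erefl i)).

Lemma sum_proj_summand_diffeo i :
  diffeo_onto (fun a : subspace (summand i) => sum_proj (val a))
              (sum_proj @` summand i).
Proof.
split.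
- exact: smooth_comp (@smooth_val _ _) sum_proj_smooth.
- apply/seteqP; split; first by move=> x [a _ <-]; exists (val a) => //; exact: set_mem (valP a).
  by move=> x [w wi <-]; exists (exist _ w (mem_set wi)).
- exists (@summand_incl i); split.
    move=> n U c pc; split => // u.
    by exists setT; split => //; exact: openT.
  split => // -[[[j x] Ajx] wi] h /=.
  by apply: eq_exist; apply: eq_exist; rewrite /= -(set_mem wi).
Qed.

Lemma sum_proj_D_local_diffeo : (forall i, Dopen (A i)) -> D_local_diffeo sum_proj.
Proof.
move=> DA; split; first exact: sum_proj_smooth.
move=> w; exists (summand (sval w).1); split => //.
- exact: summand_Dopen.
- by rewrite sum_proj_summand.
- exact: sum_proj_summand_diffeo.
Qed.

Lemma sum_proj_surjective : (forall x, exists i, A i x) -> sum_proj @` setT = setT.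
Proof.
move=> Acov; apply/seteqP; split => // x _; have [i Ax] := Acov x.
by exists (exist _ (i, x) Ax).
Qed.

Section Lift.
Local Unset Implicit Arguments.
Variables (Y : diffspace) (p : Y -> X) (s : forall i, subspace (A i) -> Y).
Hypotheses (s_smooth : forall i, smooth (s i))
           (s_section : forall i (a : subspace (A i)), p (s i a) = val a).

Definition sum_lift (w : sum_space) : Y :=
  s (sval w).1 (exist (fun x => x \in A (sval w).1) (sval w).2 (mem_set (proj2_sig w))).

Lemma sum_lift_section w : p (sum_lift w) = sum_proj w.
Proof. exact: s_section. Qed.

Lemma section_congr j k x (hj : x \in A j) (hk : x \in A k) :
  j = k -> s j (exist _ x hj) = s k (exist _ x hk).
Proof. by move=> jk; subst k; exact: exist_mem_irr. Qed.

(* On a small enough neighbourhood a plot of the sum stays in one summand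
   [A i], where the lift is [s i] composed with a plot of [A i]. *)
Lemma sum_lift_smooth : smooth sum_lift.
Proof.
move=> n U c pc; have oU := sum_plot_open pc.
apply: (plot_local oU) => x Ux.
have [V [oV Vx cV]] := pc.2 (exist _ x (mem_set Ux)).
set i := (sval (c (exist _ x (mem_set Ux)))).1 in cV.
have h : V `&` U `<=` U by move=> y [].
have ci (w : V `&` U) : (sval (c (incl_dom h w))).1 = i.
  by apply: (cV (incl_dom h w)); case: (set_mem (valP w)).
exists (V `&` U), h; split => //; first exact: openI oV oU.
have cA (w : V `&` U) : (sval (c (incl_dom h w))).2 \in A i.
  by apply: mem_set; rewrite -(ci w); exact: (proj2_sig (c (incl_dom h w))).
pose cAi (w : V `&` U) : subspace (A i) := exist (fun y => y \in A i) _ (cA w).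
have -> : sum_lift \o c \o incl_dom h = s i \o cAi.
  by apply: funext => w; exact: section_congr.
apply: s_smooth; exact: plot_comp pc.1 (openI oV oU) (smooth_dom_incl h).
Qed.

End Lift.
End SumSpace.

Section FromLocalSections.
Local Unset Implicit Arguments.
Variables (Y X : diffspace) (p : Y -> X).

Record local_section := LocalSection {
  ls_dom : set X;
  ls_map : subspace ls_dom -> Y;
  ls_Dopen : Dopen ls_dom;
  ls_smooth : smooth ls_map;
  ls_section : forall b, p (ls_map b) = val b }.

Hypothesis p_sections : local_sections p.

Lemma local_section_cover x : exists s : local_section, ls_dom s x.
Proof.
have [B [DB Bx [s [ss ps]]]] := p_sections x.
by exists (LocalSection B s DB ss ps).
Qed.

(* The covering is the sum of the domains of all local sections of [p]. *)
Lemma local_sections_split_suDld : locally_split (@T_suDld R) p.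
Proof.
exists (@Family R X unit (fun _ => sum_space ls_dom)
  (fun _ => @sum_proj X _ ls_dom) (fun _ => @sum_proj_smooth X _ ls_dom)).
split.
  split; first by exists tt; case.
  move=> u; split; first exact: sum_proj_D_local_diffeo ls_Dopen.
  exact: sum_proj_surjective local_section_cover.
exists (fun _ => sum_lift X _ ls_dom Y ls_map); split => u.
  exact: sum_lift_smooth ls_smooth.
exact: sum_lift_section ls_section.
Qed.

Lemma local_sections_split_Dop : locally_split (@T_Dop R) p.
Proof.
exists (@Family R X local_section (fun s => subspace (ls_dom s))
  (fun s b => val b) (fun s => @smooth_val X (ls_dom s))).
split.
  split.
    move=> x; have [s Bx] := local_section_cover x.
    by exists s, (exist (fun y => y \in ls_dom s) x (mem_set Bx)).
  move=> s; split; last exact: val_diffeo_onto.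
  by rewrite /= val_image; exact: ls_Dopen.
by exists ls_map; split => s; [exact: ls_smooth | exact: ls_section].
Qed.

End FromLocalSections.

Section LocallySplitIff.
Variables (Y X : diffspace) (p : Y -> X).

Lemma locally_split_Dlsplit_iff : locally_split (@T_Dlsplit R) p <-> local_sections p.
Proof.
split; first by apply: locally_split_local_sections => F; exact: Dlsplit_local_sections.
move/local_sections_split_suDld => /(cov_sub_locally_split suDld_sub_suDsu).
exact: cov_sub_locally_split suDsu_sub_Dlsplit.
Qed.

Lemma locally_split_suDsu_iff : locally_split (@T_suDsu R) p <-> local_sections p.
Proof.
split; first by move/(cov_sub_locally_split suDsu_sub_Dlsplit)/locally_split_Dlsplit_iff.
by move/local_sections_split_suDld; exact: cov_sub_locally_split suDld_sub_suDsu.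
Qed.

Lemma locally_split_suDld_iff : locally_split (@T_suDld R) p <-> local_sections p.
Proof.
split; last exact: local_sections_split_suDld.
by move/(cov_sub_locally_split suDld_sub_suDsu)/locally_split_suDsu_iff.
Qed.

Lemma locally_split_Dop_iff : locally_split (@T_Dop R) p <-> local_sections p.
Proof.
split; last exact: local_sections_split_Dop.
by apply: locally_split_local_sections => F; exact: D_open_cover_local_sections.
Qed.

End LocallySplitIff.

Lemma cov_sim_local_sections (T1 T2 : @coverage R) :
  (forall (Y X : diffspace) (p : Y -> X), locally_split T1 p <-> local_sections p) ->
  (forall (Y X : diffspace) (p : Y -> X), locally_split T2 p <-> local_sections p) ->
  cov_sim T1 T2.
Proof.
move=> T1sec T2sec.
by split => Y X p _ Tp; [apply/(T2sec _ _ p)/(T1sec _ _ p) | apply/(T1sec _ _ p)/(T2sec _ _ p)].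
Qed.

End Diffeology.

Theorem mainTheorem14 (R : realType) :
  cov_prec (@T_numDop R) (@T_Dop R) /\
  cov_sim (@T_Dop R) (@T_suDld R) /\
  cov_sub (@T_suDld R) (@T_suDsu R) /\ cov_sim (@T_suDld R) (@T_suDsu R) /\
  cov_sub (@T_suDsu R) (@T_Dlsplit R) /\ cov_sim (@T_suDsu R) (@T_Dlsplit R) /\
  cov_sub (@T_Dlsplit R) (@T_sudu R) /\
  cov_sub (@T_suDsu R) (@T_susu R) /\ cov_sub (@T_susu R) (@T_sudu R).
Proof.
have Dop := @locally_split_Dop_iff R.
have suDld := @locally_split_suDld_iff R.
have suDsu := @locally_split_suDsu_iff R.
have Dlsplit := @locally_split_Dlsplit_iff R.
split; first exact: cov_sub_prec numDop_sub_Dop.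
split; first exact: cov_sim_local_sections Dop suDld.
split; first exact: suDld_sub_suDsu.
split; first exact: cov_sim_local_sections suDld suDsu.
split; first exact: suDsu_sub_Dlsplit.
split; first exact: cov_sim_local_sections suDsu Dlsplit.
split; first exact: Dlsplit_sub_sudu.
split; [exact: suDsu_sub_susu | exact: susu_sub_sudu].
Qed.
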